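(* Suppose $t=t(n)=\alpha_0(n)+O(1)$ is an integer. Then, uniformly over all $n$ and all real $\rho\ge2$ with $t-\rho=\Theta(1)$, \[ y_t(\rho)=2\log n-\log\log n+O(1). \]
   Context: $\alpha_0(n)=2\log_2 n-2\log_2\log_2 n+2\log_2(e/2)+1$. $d_i=2^{\binom i2}i!$. For positive integer $t$ and real $1<\rho<t$, $x_t(\rho),y_t(\rho)$ are the unique reals $x,y$ with $\sum_{i=1}^t e^{x+iy}d_i^{-1}=1$ and $\sum_{i=1}^t ie^{x+iy}d_i^{-1}=\rho$. Logarithms are natural. *)

From Stdlib Require Import Reals Lra Lia ClassicalEpsilon Factorial.
Open Scope R_scope.

Fixpoint sum1 (f : nat -> R) (t : nat) : R :=
  match t with
  | O => 0
  | S k => sum1 f k + f (S k)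
  end.

Definition log2 (x : R) : R := ln x / ln 2.

Definition alpha0 (n : R) : R :=
  2 * log2 n - 2 * log2 (log2 n) + 2 * log2 (exp 1 / 2) + 1.

(* d_i = 2^{binom(i,2)} i!   (binom(i,2) = i(i-1)/2, exact division) *)
Definition d (i : nat) : R := 2 ^ (Nat.div (i * (i - 1)) 2) * INR (fact i).

Definition xy_spec (t : nat) (rho : R) (p : R * R) : Prop :=
  sum1 (fun i => exp (fst p + INR i * snd p) / d i) t = 1 /\
  sum1 (fun i => INR i * exp (fst p + INR i * snd p) / d i) t = rho.

(* The (unique, for 1 < rho < t) solution, chosen via Hilbert's epsilon. *)
Definition xy (t : nat) (rho : R) : R * R :=
  epsilon (inhabits (0, 0)) (xy_spec t rho).

Definition x_t (t : nat) (rho : R) : R := fst (xy t rho).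
Definition y_t (t : nat) (rho : R) : R := snd (xy t rho).

From Stdlib Require Import Reals Lra Lia Psatz ClassicalEpsilon Factorial.
Open Scope R_scope.

(* Eliminating x, the defining equations say that y = y_t(rho) solves the mean equation
   sum_i i w_y(i) = rho * sum_i w_y(i) for the weights w_y(i) = e^(iy) / d_i, whose
   consecutive ratios are e^y / (2^i (i+1)).  If e^y >= (1 + 2/c1) 2^(t-1) t the weights grow
   geometrically up to t, so their mean exceeds t - c1; if e^y <= 2^(t-k) (t-k+1) / (2 + 4 c2)
   with k >= c2 + 1 they decay geometrically beyond t - k, so their mean is below t - c2.
   Hence y_t(rho) = t ln 2 + ln t + O(1) when c1 <= t - rho <= c2, and t = alpha_0(n) + O(1)
   gives t ln 2 = 2 ln n - 2 ln ln n + O(1) and ln t = ln ln n + O(1). *)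

Lemma sum1_ext f g t :
  (forall i, (1 <= i <= t)%nat -> f i = g i) -> sum1 f t = sum1 g t.
Proof.
  induction t as [|t IH]; intros H; simpl; [reflexivity|].
  rewrite IH, H; [reflexivity | lia | intros; apply H; lia].
Qed.

Lemma sum1_scal c f t : sum1 (fun i => c * f i) t = c * sum1 f t.
Proof. induction t as [|t IH]; simpl; [|rewrite IH]; ring. Qed.

Lemma sum1_nonneg f t : (forall i, 0 <= f i) -> 0 <= sum1 f t.
Proof. intros H; induction t as [|t IH]; simpl; [lra|]. specialize (H (S t)); lra. Qed.

Lemma sum1_ge_last f t : (forall i, 0 <= f i) -> (1 <= t)%nat -> f t <= sum1 f t.
Proof.
  intros H Ht. destruct t as [|t]; [lia|]. simpl.
  pose proof (sum1_nonneg f t H). lra.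
Qed.

Lemma sum1_growing_le_last (f : nat -> R) (r : R) m :
  1 < r -> (forall i, 0 <= f i) -> (forall i, (i < m)%nat -> r * f i <= f (S i)) ->
  (r - 1) * sum1 f m <= r * f m.
Proof.
  intros Hr Hf. induction m as [|m IH]; intros H; simpl.
  - specialize (Hf 0%nat). nra.
  - assert (IH' := IH (fun i Hi => H i ltac:(lia))).
    specialize (H m ltac:(lia)). lra.
Qed.

Lemma sum1_growing_mean_gap (f : nat -> R) (r : R) m :
  1 < r -> (forall i, 0 <= f i) -> (forall i, (i < m)%nat -> r * f i <= f (S i)) ->
  (r - 1) * (INR m * sum1 f m - sum1 (fun i => INR i * f i) m) <= sum1 f m.
Proof.
  intros Hr Hf. induction m as [|m IH]; intros H; cbn [sum1].
  - simpl. lra.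
  - assert (Hlast := sum1_growing_le_last f r m Hr Hf (fun i Hi => H i ltac:(lia))).
    assert (IH' := IH (fun i Hi => H i ltac:(lia))).
    specialize (H m ltac:(lia)). rewrite S_INR. nra.
Qed.

Lemma sum1_le_mono f K m : (forall i, 0 <= f i) -> (K <= m)%nat -> sum1 f K <= sum1 f m.
Proof.
  intros Hf HK. induction HK as [|m HK IH]; cbn [sum1]; [lra|].
  specialize (Hf (S m)). lra.
Qed.

Lemma sum1_weighted_diff_le (f : nat -> R) K m : (forall i, 0 <= f i) -> (K <= m)%nat ->
  sum1 (fun i => INR i * f i) m - sum1 (fun i => INR i * f i) K
    <= INR m * (sum1 f m - sum1 f K).
Proof.
  intros Hf HK. induction HK as [|m HK IH]; [lra|]. cbn [sum1].
  pose proof (sum1_le_mono f K m Hf HK). pose proof (Hf (S m)).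
  rewrite S_INR. nra.
Qed.

Lemma sum1_decaying_tail (f : nat -> R) (eps : R) K j :
  0 < eps < 1 -> (forall i, 0 <= f i) ->
  (forall i, (K <= i < K + j)%nat -> f (S i) <= eps * f i) ->
  (1 - eps) * (sum1 f (K + j)%nat - sum1 f K) <= eps * f K.
Proof.
  intros He Hf H.
  enough ((1 - eps) * (sum1 f (K + j)%nat - sum1 f K) + eps * f (K + j)%nat <= eps * f K)
    by (pose proof (Hf (K + j)%nat); nra).
  induction j as [|j IH].
  - rewrite Nat.add_0_r. lra.
  - rewrite Nat.add_succ_r. cbn [sum1].
    assert (IH' := IH (fun i Hi => H i ltac:(lia))).
    specialize (H (K + j)%nat ltac:(lia)). lra.
Qed.

Lemma continuity_sum1 (g : nat -> R -> R) t :
  (forall i, continuity (g i)) -> continuity (fun y => sum1 (fun i => g i y) t).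
Proof.
  intros Hg. induction t as [|t IH]; intros x; cbn [sum1].
  - apply continuity_pt_const. intros a b; reflexivity.
  - exact (continuity_pt_plus _ _ x (IH x) (Hg (S t) x)).
Qed.

Lemma ln2_pos : 0 < ln 2.
Proof. pose proof ln_lt_2. lra. Qed.

Lemma Rabs_le_inv x a : Rabs x <= a -> - a <= x <= a.
Proof.
  intros H. pose proof (Rle_abs x). pose proof (Rle_abs (- x)). rewrite Rabs_Ropp in *. lra.
Qed.

Lemma ln_le x y : 0 < x -> x <= y -> ln x <= ln y.
Proof. intros Hx [H|H]; [left; apply ln_increasing | subst]; lra. Qed.

Lemma ln_mul_pow2 c m x : 0 < c -> 0 < x ->
  ln (c * (2 ^ m * x)) = ln c + INR m * ln 2 + ln x.
Proof.
  intros Hc Hx. pose proof (pow_lt 2 m ltac:(lra)).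
  rewrite !ln_mult, ln_pow by (try apply Rmult_lt_0_compat; lra). ring.
Qed.

Lemma ln_le_half x : 0 < x -> ln x <= x / 2.
Proof.
  intros Hx. pose proof (sqrt_lt_R0 x Hx) as Hs. pose proof (sqrt_sqrt x ltac:(lra)) as Hss.
  assert (Hln : ln x = 2 * ln (sqrt x)) by (rewrite <- Hss at 1; rewrite ln_mult by lra; ring).
  pose proof (exp_ineq1_le (ln (sqrt x))) as Hexp. rewrite exp_ln in Hexp by lra.
  pose proof (pow2_ge_0 (sqrt x - 2)). nra.
Qed.

Lemma ln_near x ell : 0 < ell -> ell / 2 <= x <= 3 * ell -> Rabs (ln x - ln ell) <= ln 3.
Proof.
  intros Hell Hx. apply Rabs_le.
  assert (Hlo : ln (ell / 2) <= ln x) by (apply ln_le; lra).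
  assert (Hhi : ln x <= ln (3 * ell)) by (apply ln_le; lra).
  unfold Rdiv in Hlo. rewrite ln_mult, ln_Rinv in Hlo by lra. rewrite ln_mult in Hhi by lra.
  pose proof (ln_le 2 3 ltac:(lra) ltac:(lra)). pose proof ln2_pos. lra.
Qed.

Lemma d_pos i : 0 < d i.
Proof.
  unfold d. apply Rmult_lt_0_compat; [apply pow_lt; lra|].
  apply lt_0_INR, lt_O_fact.
Qed.

Lemma d_succ i : d (S i) = d i * 2 ^ i * INR (S i).
Proof.
  unfold d.
  replace (S i * (S i - 1))%nat with (i * (i - 1) + i * 2)%nat by (destruct i; simpl; nia).
  rewrite Nat.div_add, pow_add, fact_simpl, mult_INR by lia. ring.
Qed.

Definition w (y : R) (i : nat) : R := exp (INR i * y) / d i.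
Definition mass (y : R) (t : nat) : R := sum1 (w y) t.
Definition moment (y : R) (t : nat) : R := sum1 (fun i => INR i * w y i) t.

Lemma w_pos y i : 0 < w y i.
Proof. apply Rdiv_lt_0_compat; [apply exp_pos | apply d_pos]. Qed.

Lemma w_nonneg y i : 0 <= w y i.
Proof. apply Rlt_le, w_pos. Qed.

Lemma w_succ y i : w y (S i) = w y i * (exp y / (2 ^ i * INR (S i))).
Proof.
  unfold w. rewrite d_succ, S_INR, Rmult_plus_distr_r, Rmult_1_l, exp_plus.
  pose proof (d_pos i). pose proof (pow_lt 2 i ltac:(lra)). pose proof (pos_INR i).
  field. lra.
Qed.

Lemma w_succ_ge y i r :
  r * (2 ^ i * INR (S i)) <= exp y -> r * w y i <= w y (S i).
Proof.
  intros H. rewrite w_succ.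
  pose proof (w_pos y i). pose proof (pow_lt 2 i ltac:(lra)).
  pose proof (lt_0_INR (S i) ltac:(lia)).
  assert (r <= exp y / (2 ^ i * INR (S i))).
  { apply (Rmult_le_reg_r (2 ^ i * INR (S i))); [nra|].
    unfold Rdiv. rewrite Rmult_assoc, Rinv_l by nra. lra. }
  nra.
Qed.

Lemma w_succ_le y i e :
  exp y <= e * (2 ^ i * INR (S i)) -> w y (S i) <= e * w y i.
Proof.
  intros H. rewrite w_succ.
  pose proof (w_pos y i). pose proof (pow_lt 2 i ltac:(lra)).
  pose proof (lt_0_INR (S i) ltac:(lia)).
  assert (exp y / (2 ^ i * INR (S i)) <= e).
  { apply (Rmult_le_reg_r (2 ^ i * INR (S i))); [nra|].
    unfold Rdiv. rewrite Rmult_assoc, Rinv_l by nra. lra. }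
  nra.
Qed.

Lemma mass_pos y t : (1 <= t)%nat -> 0 < mass y t.
Proof.
  intros Ht. apply (Rlt_le_trans _ (w y t)); [apply w_pos|].
  apply sum1_ge_last; [apply w_nonneg | exact Ht].
Qed.

Lemma xy_spec_iff t rho x y :
  xy_spec t rho (x, y) <-> exp x * mass y t = 1 /\ exp x * moment y t = rho.
Proof.
  unfold xy_spec, mass, moment; simpl. rewrite <- !sum1_scal.
  rewrite (sum1_ext (fun i => exp (x + INR i * y) / d i) (fun i => exp x * w y i)),
    (sum1_ext (fun i => INR i * exp (x + INR i * y) / d i) (fun i => exp x * (INR i * w y i)));
    [reflexivity | |]; intros i _; unfold w; rewrite exp_plus; field; apply Rgt_not_eq, d_pos.
Qed.

Lemma mean_eq_of_xy_spec t rho p :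
  xy_spec t rho p -> moment (snd p) t = rho * mass (snd p) t.
Proof.
  destruct p as [x y]; simpl. intros [E1 E2]%xy_spec_iff.
  rewrite <- E2. transitivity (moment y t * (exp x * mass y t)); [rewrite E1|]; ring.
Qed.

Lemma xy_spec_of_mean_eq t rho y : (1 <= t)%nat ->
  moment y t = rho * mass y t -> xy_spec t rho (- ln (mass y t), y).
Proof.
  intros Ht E. pose proof (mass_pos y t Ht).
  apply xy_spec_iff. rewrite exp_Ropp, exp_ln, E by lra. split; field; lra.
Qed.

Lemma y_t_mean_eq t rho : (exists p, xy_spec t rho p) ->
  moment (y_t t rho) t = rho * mass (y_t t rho) t.
Proof. intros Hex. apply mean_eq_of_xy_spec. exact (epsilon_spec _ _ Hex). Qed.

Lemma continuity_mean_gap t rho : continuity (fun y => moment y t - rho * mass y t).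
Proof.
  assert (Hw : forall i, continuity (fun y => w y i))
    by (intros i; unfold w; pose proof (d_pos i); reg).
  apply continuity_minus; [|apply continuity_scal].
  - apply (continuity_sum1 (fun i y => INR i * w y i)).
    intros i. exact (continuity_scal _ (INR i) (Hw i)).
  - apply (continuity_sum1 (fun i y => w y i)), Hw.
Qed.

Lemma xy_spec_exists t rho a b : (1 <= t)%nat -> a < b ->
  moment a t < rho * mass a t -> rho * mass b t < moment b t -> exists p, xy_spec t rho p.
Proof.
  intros Ht Hab Ha Hb.
  destruct (IVT _ a b (continuity_mean_gap t rho) Hab) as [y [_ Hy]]; [lra | lra |].
  exists (- ln (mass y t), y). apply xy_spec_of_mean_eq; [exact Ht | lra].
Qed.

Lemma moment_gt_mass t c1 rho y : (1 <= t)%nat -> 0 < c1 -> rho <= INR t - c1 ->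
  (1 + 2 / c1) * (2 ^ (t - 1) * INR t) <= exp y -> rho * mass y t < moment y t.
Proof.
  intros Ht Hc1 Hrho Hy.
  assert (Hr : 1 < 1 + 2 / c1) by (pose proof (Rdiv_lt_0_compat 2 c1 ltac:(lra) Hc1); lra).
  assert (Hgrow : forall i, (i < t)%nat -> (1 + 2 / c1) * w y i <= w y (S i)).
  { intros i Hi. apply w_succ_ge. eapply Rle_trans; [|exact Hy].
    apply Rmult_le_compat_l; [lra|].
    apply Rmult_le_compat; [apply pow_le; lra | apply pos_INR | |].
    - apply Rle_pow; [lra | lia].
    - apply le_INR; lia. }
  pose proof (sum1_growing_mean_gap (w y) _ t Hr (w_nonneg y) Hgrow) as Hgap.
  fold (mass y t) (moment y t) in Hgap. pose proof (mass_pos y t Ht).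
  replace (1 + 2 / c1 - 1) with (2 / c1) in Hgap by ring.
  assert (INR t * mass y t - moment y t <= c1 / 2 * mass y t).
  { apply (Rmult_le_compat_l (c1 / 2)) in Hgap; [|lra].
    replace (c1 / 2 * (2 / c1 * (INR t * mass y t - moment y t)))
      with (INR t * mass y t - moment y t) in Hgap by (field; lra).
    exact Hgap. }
  nra.
Qed.

Lemma moment_lt_mass K k c2 rho y : 0 < c2 -> c2 + 1 <= INR k -> (1 <= K)%nat ->
  INR (K + k) - c2 <= rho -> exp y <= / (2 + 4 * c2) * (2 ^ K * INR (S K)) ->
  moment y (K + k) < rho * mass y (K + k).
Proof.
  intros Hc2 Hk HK Hrho Hy. set (eps := / (2 + 4 * c2)).
  assert (Heps : eps * (2 + 4 * c2) = 1) by (unfold eps; field; lra).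
  assert (Heps01 : 0 < eps < 1) by (split; [apply Rinv_0_lt_compat|]; nra).
  assert (Hdecay : forall i, (K <= i < K + k)%nat -> w y (S i) <= eps * w y i).
  { intros i Hi. apply w_succ_le. eapply Rle_trans; [exact Hy|].
    apply Rmult_le_compat_l; [lra|].
    apply Rmult_le_compat; [apply pow_le; lra | apply pos_INR | |].
    - apply Rle_pow; [lra | lia].
    - apply le_INR; lia. }
  pose proof (sum1_decaying_tail (w y) eps K k Heps01 (w_nonneg y) Hdecay) as Htail.
  pose proof (sum1_weighted_diff_le (w y) K (K + k) (w_nonneg y) ltac:(lia)) as Htop.
  pose proof (sum1_weighted_diff_le (w y) 0 K (w_nonneg y) ltac:(lia)) as Hbottom.
  pose proof (sum1_ge_last (w y) K (w_nonneg y) HK) as HwK.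
  pose proof (mass_pos y K HK).
  pose proof (sum1_le_mono (w y) K (K + k) (w_nonneg y) ltac:(lia)).
  unfold mass, moment in *. cbn [sum1] in Hbottom. rewrite plus_INR in *.
  set (SK := sum1 (w y) K) in *. set (D := sum1 (w y) (K + k) - SK).
  replace (sum1 (w y) (K + k)) with (SK + D) in * by (unfold D; ring).
  assert (HD : (1 + 4 * c2) * D <= SK).
  { apply (Rmult_le_compat_l (2 + 4 * c2)) in Htail; [|lra].
    replace ((2 + 4 * c2) * (eps * w y K)) with (w y K) in Htail
      by (rewrite <- (Rmult_1_l (w y K)) at 1; rewrite <- Heps; ring).
    nra. }
  assert (0 <= (rho - (INR K + INR k - c2)) * (SK + D)) by (apply Rmult_le_pos; lra).
  assert (0 <= (INR k - c2 - 1) * SK) by (apply Rmult_le_pos; lra).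
  nra.
Qed.

Lemma y_t_bounds t k c1 c2 rho : 0 < c1 -> c2 + 1 <= INR k -> (k < t)%nat ->
  c1 <= INR t - rho <= c2 ->
  / (2 + 4 * c2) * (2 ^ (t - k) * INR (S (t - k))) < exp (y_t t rho)
    < (1 + 2 / c1) * (2 ^ (t - 1) * INR t).
Proof.
  intros Hc1 Hk Hkt Hrho.
  set (lo := / (2 + 4 * c2) * (2 ^ (t - k) * INR (S (t - k)))).
  set (hi := (1 + 2 / c1) * (2 ^ (t - 1) * INR t)).
  assert (Hlo : 0 < lo).
  { apply Rmult_lt_0_compat; [apply Rinv_0_lt_compat; lra|].
    apply Rmult_lt_0_compat; [apply pow_lt; lra | apply lt_0_INR; lia]. }
  assert (Hhi : 0 < hi).
  { apply Rmult_lt_0_compat; [pose proof (Rdiv_lt_0_compat 2 c1 ltac:(lra) Hc1); lra|].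
    apply Rmult_lt_0_compat; [apply pow_lt; lra | apply lt_0_INR; lia]. }
  assert (below : forall y, exp y <= lo -> moment y t < rho * mass y t).
  { intros y Hy. replace t with (t - k + k)%nat by lia.
    apply (moment_lt_mass _ _ c2); [lra | exact Hk | lia | | exact Hy].
    replace (t - k + k)%nat with t by lia. lra. }
  assert (above : forall y, hi <= exp y -> rho * mass y t < moment y t).
  { intros y Hy. apply (moment_gt_mass _ c1); [lia | exact Hc1 | lra | exact Hy]. }
  assert (Hex : exists p, xy_spec t rho p).
  { apply (xy_spec_exists t rho (ln lo - 1) (Rmax (ln lo) (ln hi) + 1)); [lia | | |].
    - pose proof (Rmax_l (ln lo) (ln hi)). lra.
    - apply below. rewrite <- (exp_ln lo) at 2 by exact Hlo. left; apply exp_increasing; lra.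
    - apply above. rewrite <- (exp_ln hi) at 1 by exact Hhi. left; apply exp_increasing.
      pose proof (Rmax_r (ln lo) (ln hi)). lra. }
  pose proof (y_t_mean_eq t rho Hex) as E.
  split.
  - destruct (Rlt_or_le lo (exp (y_t t rho))) as [H|H]; [exact H|].
    apply below in H. lra.
  - destruct (Rlt_or_le (exp (y_t t rho)) hi) as [H|H]; [exact H|].
    apply above in H. lra.
Qed.

Lemma y_t_asymptotics c1 c2 : 0 < c1 ->
  exists K T0 : R, forall t rho, T0 <= INR t -> c1 <= INR t - rho <= c2 ->
    Rabs (y_t t rho - (INR t * ln 2 + ln (INR t))) <= K.
Proof.
  intros Hc1. destruct (INR_unbounded (c2 + 1)) as [k Hk].
  exists (Rabs (ln (/ (2 + 4 * c2))) + (INR k + 1) * ln 2 + Rabs (ln (1 + 2 / c1))),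
    (2 * INR k + 2).
  intros t rho Ht Hrho.
  assert (Hkt : (k < t)%nat) by (apply INR_lt; pose proof (pos_INR k); lra).
  destruct (y_t_bounds t k c1 c2 rho Hc1 ltac:(lra) Hkt Hrho) as [Hlo Hhi].
  pose proof ln2_pos as Hl2.
  assert (Ht0 : 0 < INR t) by lra.
  assert (Hc1' : 0 < 1 + 2 / c1) by (pose proof (Rdiv_lt_0_compat 2 c1 ltac:(lra) Hc1); lra).
  assert (Hc2 : 0 < / (2 + 4 * c2)) by (apply Rinv_0_lt_compat; lra).
  assert (Hhead : 0 < INR (S (t - k))) by (apply lt_0_INR; lia).
  apply ln_increasing in Hlo;
    [|apply Rmult_lt_0_compat, Rmult_lt_0_compat; try apply pow_lt; lra].
  apply ln_increasing in Hhi; [|apply exp_pos].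
  rewrite ln_exp, ln_mul_pow2 in Hlo, Hhi by lra.
  rewrite minus_INR in Hlo, Hhi by lia. simpl (INR 1) in Hhi.
  assert (Hshift : ln (INR t) - ln 2 <= ln (INR (S (t - k)))).
  { replace (ln (INR t) - ln 2) with (ln (INR t * / 2))
      by (rewrite ln_mult, ln_Rinv by lra; ring).
    apply ln_le; [lra|]. rewrite S_INR, minus_INR by lia. lra. }
  pose proof (Rabs_le_inv _ _ (Rle_refl (Rabs (ln (/ (2 + 4 * c2)))))).
  pose proof (Rabs_le_inv _ _ (Rle_refl (Rabs (ln (1 + 2 / c1))))).
  assert (0 <= INR k * ln 2) by (apply Rmult_le_pos; [apply pos_INR | lra]).
  rewrite Rmult_minus_distr_r in Hlo, Hhi. rewrite Rmult_plus_distr_r, Rmult_1_l in *.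
  apply Rabs_le. split; lra.
Qed.

Lemma alpha0_mul_ln2 n : 1 < n ->
  alpha0 n * ln 2 = 2 * ln n - 2 * ln (ln n) + (2 * ln (ln 2) + 2 - ln 2).
Proof.
  intros Hn. pose proof ln2_pos. assert (0 < ln n) by (rewrite <- ln_1; apply ln_increasing; lra).
  unfold alpha0, log2, Rdiv.
  rewrite !ln_mult, !ln_Rinv, ln_exp by (try apply Rinv_0_lt_compat; try apply exp_pos; lra).
  field. lra.
Qed.

Lemma t_mul_ln2_near T n C : 1 < n -> Rabs (T - alpha0 n) <= C ->
  Rabs (T * ln 2 - (2 * ln n - 2 * ln (ln n))) <= C * ln 2 + Rabs (2 * ln (ln 2) + 2 - ln 2).
Proof.
  intros Hn HC. pose proof ln2_pos.
  replace (T * ln 2 - (2 * ln n - 2 * ln (ln n)))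
    with ((T - alpha0 n) * ln 2 + (2 * ln (ln 2) + 2 - ln 2))
    by (rewrite Rmult_minus_distr_r, alpha0_mul_ln2 by lra; ring).
  eapply Rle_trans; [apply Rabs_triang|].
  rewrite Rabs_mult, (Rabs_right (ln 2)) by lra.
  apply Rplus_le_compat_r, Rmult_le_compat_r; lra.
Qed.

Lemma t_mul_ln2_between T ell E : 1 <= ell -> 2 * E <= ell ->
  Rabs (T * ln 2 - (2 * ell - 2 * ln ell)) <= E -> ell / 2 <= T * ln 2 <= 3 * ell.
Proof.
  intros Hell HE HT%Rabs_le_inv.
  pose proof (ln_le_half ell ltac:(lra)).
  pose proof (ln_le 1 ell ltac:(lra) Hell). rewrite ln_1 in *.
  lra.
Qed.

Lemma t_mul_ln2_add_ln_t_near T ell E : 1 <= ell -> 2 * E <= ell ->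
  Rabs (T * ln 2 - (2 * ell - 2 * ln ell)) <= E ->
  Rabs (T * ln 2 + ln T - (2 * ell - ln ell)) <= E + ln 3 + Rabs (ln (ln 2)).
Proof.
  intros Hell HE HT. pose proof ln2_pos.
  pose proof (t_mul_ln2_between T ell E Hell HE HT) as HTl.
  assert (HlnT : ln T = ln (T * ln 2) - ln (ln 2)).
  { rewrite ln_mult; [ring | |]; nra. }
  pose proof (ln_near (T * ln 2) ell ltac:(lra) HTl) as Hln.
  replace (T * ln 2 + ln T - (2 * ell - ln ell))
    with ((T * ln 2 - (2 * ell - 2 * ln ell)) + (ln (T * ln 2) - ln ell) - ln (ln 2))
    by (rewrite HlnT; ring).
  unfold Rminus at 1. eapply Rle_trans; [apply Rabs_triang|]. rewrite Rabs_Ropp.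
  pose proof (Rabs_triang (T * ln 2 - (2 * ell - 2 * ln ell)) (ln (T * ln 2) - ln ell)).
  lra.
Qed.

Lemma ln_nat_eventually_ge M : exists N : nat, forall n : nat, (N <= n)%nat ->
  1 < INR n /\ M <= ln (INR n).
Proof.
  destruct (INR_unbounded (Rmax 1 (exp M))) as [N HN].
  exists N. intros n Hn. apply le_INR in Hn.
  pose proof (Rmax_l 1 (exp M)). pose proof (Rmax_r 1 (exp M)).
  split; [lra|]. rewrite <- (ln_exp M). apply ln_le; [apply exp_pos | lra].
Qed.

Theorem corollary38 (t : nat -> nat) :
  (* t(n) = alpha_0(n) + O(1) *)
  (exists C : R, exists N0 : nat, forall n : nat, (N0 <= n)%nat ->
      Rabs (INR (t n) - alpha0 (INR n)) <= C) ->
  (* uniformly over n and real rho >= 2 with c1 <= t - rho <= c2 *)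
  forall c1 c2 : R, 0 < c1 -> c1 <= c2 ->
  exists K : R, exists N : nat, forall n : nat, (N <= n)%nat ->
    forall rho : R, 2 <= rho -> c1 <= INR (t n) - rho <= c2 ->
      Rabs (y_t (t n) rho - (2 * ln (INR n) - ln (ln (INR n)))) <= K.
Proof.
  intros [C [N0 HC]] c1 c2 Hc1 _.
  destruct (y_t_asymptotics c1 c2 Hc1) as [K [T0 HK]].
  set (E := C * ln 2 + Rabs (2 * ln (ln 2) + 2 - ln 2)).
  destruct (ln_nat_eventually_ge (Rmax 1 (Rmax (2 * E) (2 * (T0 * ln 2))))) as [N1 HN1].
  exists (K + (E + ln 3 + Rabs (ln (ln 2)))), (Nat.max N0 N1).
  intros n Hn rho _ Hrho.
  destruct (HN1 n ltac:(lia)) as [Hn1 Hell].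
  pose proof (Rmax_l 1 (Rmax (2 * E) (2 * (T0 * ln 2)))).
  pose proof (Rmax_r 1 (Rmax (2 * E) (2 * (T0 * ln 2)))).
  pose proof (Rmax_l (2 * E) (2 * (T0 * ln 2))). pose proof (Rmax_r (2 * E) (2 * (T0 * ln 2))).
  pose proof (t_mul_ln2_near (INR (t n)) (INR n) C Hn1 (HC n ltac:(lia))) as Hnear.
  fold E in Hnear.
  destruct (t_mul_ln2_between (INR (t n)) (ln (INR n)) E ltac:(lra) ltac:(lra) Hnear) as [Hgrow _].
  assert (HT0 : T0 <= INR (t n)).
  { apply (Rmult_le_reg_r (ln 2)); [exact ln2_pos | lra]. }
  pose proof (HK (t n) rho HT0 Hrho) as Hy.
  pose proof (t_mul_ln2_add_ln_t_near (INR (t n)) (ln (INR n)) E ltac:(lra) ltac:(lra) Hnear)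
    as Hmain.
  eapply Rle_trans; [|apply Rplus_le_compat; [exact Hy | exact Hmain]].
  eapply Rle_trans; [|apply Rabs_triang]. right. f_equal. ring.
Qed.
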